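(* Let $n \in \mathbb{N}$, let $A = \begin{pmatrix} B & C \\ C^T & D\end{pmatrix} \in \mathcal{M}_{2n}(\mathbb{R})$ be symmetric positive definite with $B,C,D \in \mathcal{M}_n(\mathbb{R})$, and let $M := \tfrac{1}{2}(B + D - i(C - C^T))$ and $N := \tfrac{1}{2}(B - D + i(C + C^T))$. Then the matrix $\begin{pmatrix} M & N \\ \overline{N} & \overline{M}\end{pmatrix} \in \mathcal{M}_{2n}(\mathbb{C})$ is Hermitian and has the same eigenvalues (with multiplicities) as $A$. Moreover $M$ and $M - N\overline{M}^{-1}\overline{N}$ are Hermitian positive definite and, for $k = 1,\dots,n$, $$\lambda_k(A) \le \lambda_k(M) \le \lambda_{k+n}(A), \qquad \lambda_k(A) \le \lambda_k\big(M - N\overline{M}^{-1}\overline{N}\big) \le \lambda_{k+n}(A).$$ In particular, the condition numbers (ratio of largest to smallest eigenvalue) of $M$ and of $M - N\overline{M}^{-1}\overline{N}$ are at most that of $A$.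
   Context: For a Hermitian matrix $H$ of size $m$, $\lambda_1(H) \le \dots \le \lambda_m(H)$ denote its eigenvalues in increasing order (with multiplicity). Bars denote entrywise complex conjugation; $(\cdot)^T$ is transpose. *)

(* The complex field is modelled by an arbitrary
   numClosedFieldType C (e.g. algebraic complex numbers, or C itself);
   "real" means x \is Num.real, conjugation is Num.conj. *)
From HB Require Import structures.
From mathcomp Require Import all_boot all_order all_algebra.
Set Implicit Arguments. Unset Strict Implicit. Unset Printing Implicit Defensive.
Import Order.TTheory GRing.Theory Num.Theory.
Local Open Scope ring_scope.

Section Defs.
Variable C : numClosedFieldType.

Definition mxconj m n (A : 'M[C]_(m, n)) : 'M[C]_(m, n) := map_mx Num.conj A.

Definition adjmx m n (A : 'M[C]_(m, n)) : 'M[C]_(n, m) := (mxconj A)^T.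

Definition is_hermitian n (A : 'M[C]_n) : Prop := adjmx A = A.

Definition real_mx m n (A : 'M[C]_(m, n)) : Prop := A \is a mxOver Num.real.

Definition real_sym_posdef n (A : 'M[C]_n) : Prop :=
  [/\ real_mx A, A^T = A &
      forall v : 'cV[C]_n, real_mx v -> v != 0 -> 0 < (v^T *m A *m v) 0 0].

Definition herm_posdef n (A : 'M[C]_n) : Prop :=
  is_hermitian A /\
  forall v : 'cV[C]_n, v != 0 -> 0 < (adjmx v *m A *m v) 0 0.

(* the eigenvalues of A (roots of the characteristic polynomial, with
   multiplicity), sorted increasingly: eigs A = [:: lambda_1; ...; lambda_n].
   lambda_k(A) is (eigs A)`_(k-1). (For Hermitian A all of them are real, so the
   sort is with respect to a total order.) *)
Definition eigs n (A : 'M[C]_n) : seq C :=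
  sort <=%R (sval (closed_field_poly_normal (char_poly A))).

(* lambda_{k+1}(A), 0-indexed *)
Definition eig n (A : 'M[C]_n) (k : nat) : C := (eigs A)`_k.

Definition cond n (A : 'M[C]_n) : C := eig A n.-1 / eig A 0.

End Defs.

From HB Require Import structures.
From mathcomp Require Import all_boot all_order all_algebra.
From mathcomp Require Import zify ring.
Set Implicit Arguments. Unset Strict Implicit. Unset Printing Implicit Defensive.
Import Order.TTheory GRing.Theory Num.Theory.
Local Open Scope ring_scope.

(* With T := [[1, i], [1, -i]], which is sqrt 2 times a unitary matrix, the
   complex block matrix H equals 1/2 T A T^*: it is Hermitian, positive
   definite and similar to A, hence has the spectrum of A.  M is the leading
   block of H and S = M - N Mbar^-1 Nbar is the Schur complement of its
   trailing block Mbar.  Both interlace with H by Courant-Fischer: the form of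
   M is the form of H on the vectors (w, 0), the form of S is the form of H on
   the vectors (w, - w N Mbar^-1), which are at least as long as w, and the
   form of S is dominated by that of M.  The bounds on the extreme eigenvalues
   then compare the condition numbers. *)

Lemma char_poly_similar (R : comNzRingType) p (X U V : 'M[R]_p) :
  U *m V = 1%:M -> char_poly (V *m X *m U) = char_poly X.
Proof.
move=> UV; have VU : V *m U = 1%:M by apply: mulmx1C.
rewrite /char_poly; have -> : char_poly_mx (V *m X *m U) =
          map_mx polyC V *m char_poly_mx X *m map_mx polyC U.
  rewrite /char_poly_mx mulmxBr mulmxBl !map_mxM; congr (_ - _).
  by rewrite scalar_mxC -mulmxA -map_mxM VU map_mx1 mulmx1.
rewrite !det_mulmx mulrC mulrA -det_mulmx -map_mxM UV map_mx1.
by rewrite det1 mul1r.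
Qed.

Lemma perm_eq_prod_XsubC (R : idomainType) (r s : seq R) :
  \prod_(z <- r) ('X - z%:P) = \prod_(z <- s) ('X - z%:P) -> perm_eq r s.
Proof.
elim: r s => [|x r IHr] s /=.
  rewrite big_nil => /(congr1 (size : {poly R} -> nat)).
  by rewrite size_poly1 size_prod_XsubC; case: s.
rewrite big_cons => E.
have xs : x \in s.
  by rewrite -root_prod_XsubC -E rootM root_XsubC eqxx.
rewrite (permPr (perm_to_rem xs)) perm_cons; apply: IHr.
move: E; rewrite (perm_big _ (perm_to_rem xs)) big_cons.
by move/mulfI; apply; rewrite polyXsubC_eq0.
Qed.

Lemma count_map_enum (T : Type) p (f : 'I_p -> T) (a : pred T) :
  count a [seq f i | i <- enum 'I_p] = #|[set i | a (f i)]|.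
Proof.
rewrite count_map cardE /enum_mem size_filter -enumT count_filter.
by apply: eq_count => i; rewrite !inE andbT.
Qed.

Lemma exists_nonzero_cap (F : fieldType) m1 m2 p (W : 'M[F]_(m1, p)) (V : 'M[F]_(m2, p)) :
  (p < \rank W + \rank V)%N ->
  exists2 w : 'rV[F]_p, w != 0 & (w <= W)%MS && (w <= V)%MS.
Proof.
move=> rWV; have : (W :&: V)%MS != 0.
  rewrite -mxrank_eq0; apply/eqP => capWV.
  have := mxrank_sum_cap W V; rewrite capWV addn0 => sumWV.
  by have := rank_leq_col (W + V)%MS; rewrite sumWV; lia.
by case/rowV0Pn => w; rewrite sub_capmx; exists w.
Qed.

Lemma row_free_row1 (F : fieldType) m n (K : 'M[F]_(m, n)) : row_free (row_mx 1%:M K).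
Proof.
rewrite /row_free eqn_leq rank_leq_row /=.
apply: leq_trans (mxrankM_maxl _ (col_mx 1%:M 0)).
by rewrite mul_row_col mulmx1 mulmx0 addr0 mxrank1.
Qed.

Section SortedCount.
Variables (disp : Order.disp_t) (T : porderType disp) (x0 : T) (s : seq T).
Hypothesis sorted_s : sorted <=%O s.

Lemma sorted_count_ge_nth k : (k < size s)%N ->
  (size s - k <= count (fun x => nth x0 s k <= x)%O s)%N.
Proof.
move=> ks; rewrite -[X in count _ X](cat_take_drop k s) count_cat.
have -> : count (fun x => nth x0 s k <= x)%O (drop k s) = size (drop k s).
  apply/eqP; rewrite -all_count; apply/(all_nthP x0) => i.
  rewrite size_drop => ik; rewrite nth_drop.
  by apply: (sorted_leq_nth le_trans lexx) => //; rewrite ?inE /=; lia.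
by rewrite size_drop leq_addl.
Qed.

Lemma sorted_count_le_nth k : (k < size s)%N ->
  (k.+1 <= count (fun x => x <= nth x0 s k)%O s)%N.
Proof.
move=> ks; rewrite -[X in count _ X](cat_take_drop k.+1 s) count_cat.
have -> : count (fun x => x <= nth x0 s k)%O (take k.+1 s) = size (take k.+1 s).
  apply/eqP; rewrite -all_count; apply/(all_nthP x0) => i.
  rewrite (size_takel ks) => ik; rewrite nth_take //.
  by apply: (sorted_leq_nth le_trans lexx) => //; rewrite ?inE /=; lia.
by rewrite size_takel // leq_addr.
Qed.

End SortedCount.

Section HermitianForms.
Variable C : numClosedFieldType.

Lemma adjmxE m n (A : 'M[C]_(m, n)) : adjmx A = (A ^t*)%sesqui.
Proof. by rewrite /adjmx /mxconj map_trmx. Qed.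

Lemma adjmxK m n (A : 'M[C]_(m, n)) : adjmx (adjmx A) = A.
Proof. by apply/matrixP => i j; rewrite !mxE conjCK. Qed.

Lemma adjmxM m n r (A : 'M[C]_(m, n)) (B : 'M[C]_(n, r)) :
  adjmx (A *m B) = adjmx B *m adjmx A.
Proof. by rewrite /adjmx /mxconj map_mxM trmx_mul. Qed.

Lemma adjmxD m n (A B : 'M[C]_(m, n)) : adjmx (A + B) = adjmx A + adjmx B.
Proof. by apply/matrixP => i j; rewrite !mxE rmorphD. Qed.

Lemma adjmxN m n (A : 'M[C]_(m, n)) : adjmx (- A) = - adjmx A.
Proof. by apply/matrixP => i j; rewrite !mxE rmorphN. Qed.

Lemma adjmxZ m n a (A : 'M[C]_(m, n)) : adjmx (a *: A) = a^* *: adjmx A.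
Proof. by apply/matrixP => i j; rewrite !mxE rmorphM. Qed.

Lemma adjmx0 m n : adjmx (0 : 'M[C]_(m, n)) = 0.
Proof. by apply/matrixP => i j; rewrite !mxE rmorph0. Qed.

Lemma adjmx_scalar m (a : C) : adjmx (a%:M : 'M[C]_m) = a^*%:M.
Proof.
apply/matrixP => i j; rewrite !mxE eq_sym.
by case: eqP; rewrite ?mulr1n ?mulr0n ?rmorph0.
Qed.

Lemma adjmx_inv n (A : 'M[C]_n) : adjmx (invmx A) = invmx (adjmx A).
Proof. by rewrite /adjmx /mxconj map_invmx trmx_inv. Qed.

Lemma adjmx_row m n1 n2 (A1 : 'M[C]_(m, n1)) (A2 : 'M[C]_(m, n2)) :
  adjmx (row_mx A1 A2) = col_mx (adjmx A1) (adjmx A2).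
Proof. by rewrite /adjmx /mxconj map_row_mx tr_row_mx. Qed.

Lemma adjmx_block m1 m2 n1 n2 (Aul : 'M[C]_(m1, n1)) (Aur : 'M[C]_(m1, n2))
    (Adl : 'M[C]_(m2, n1)) (Adr : 'M[C]_(m2, n2)) :
  adjmx (block_mx Aul Aur Adl Adr) =
  block_mx (adjmx Aul) (adjmx Adl) (adjmx Aur) (adjmx Adr).
Proof. by rewrite /adjmx /mxconj map_block_mx tr_block_mx. Qed.

Lemma mxconjD m n (A B : 'M[C]_(m, n)) : mxconj (A + B) = mxconj A + mxconj B.
Proof. exact: map_mxD. Qed.

Lemma mxconjN m n (A : 'M[C]_(m, n)) : mxconj (- A) = - mxconj A.
Proof. exact: map_mxN. Qed.

Lemma mxconjB m n (A B : 'M[C]_(m, n)) : mxconj (A - B) = mxconj A - mxconj B.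
Proof. exact: map_mxB. Qed.

Lemma mxconjZ m n a (A : 'M[C]_(m, n)) : mxconj (a *: A) = a^* *: mxconj A.
Proof. exact: map_mxZ. Qed.

Lemma mxconjT m n (A : 'M[C]_(m, n)) : mxconj A^T = (mxconj A)^T.
Proof. by rewrite /mxconj map_trmx. Qed.

Lemma mxconj_real m n (A : 'M[C]_(m, n)) : real_mx A -> mxconj A = A.
Proof. by move=> /mxOverP rA; apply/matrixP => i j; rewrite mxE conj_Creal. Qed.

Lemma adjmx_real m n (A : 'M[C]_(m, n)) : real_mx A -> adjmx A = A^T.
Proof. by move=> rA; rewrite /adjmx mxconj_real. Qed.

Definition hform p (X : 'M[C]_p) (w : 'rV[C]_p) : C := (w *m X *m adjmx w) 0 0.

Definition posdef_form p (X : 'M[C]_p) : Prop :=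
  forall w : 'rV[C]_p, w != 0 -> 0 < hform X w.

Lemma dotmx_adj p (u v : 'rV[C]_p) : dotmx u v = (u *m adjmx v) 0 0.
Proof. by rewrite dotmxE adjmxE. Qed.

Lemma dotmx_sum p (u v : 'rV[C]_p) : dotmx u v = \sum_i u 0 i * (v 0 i)^*.
Proof. by rewrite dotmx_adj mxE; apply: eq_bigr => i _; rewrite !mxE. Qed.

Lemma dotmx_row n1 n2 (u1 v1 : 'rV[C]_n1) (u2 v2 : 'rV[C]_n2) :
  dotmx (row_mx u1 u2) (row_mx v1 v2) = dotmx u1 v1 + dotmx u2 v2.
Proof. by rewrite !dotmx_adj adjmx_row mul_row_col mxE. Qed.

Lemma hform_ge0 p (X : 'M[C]_p) : posdef_form X -> forall w, 0 <= hform X w.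
Proof.
move=> pX w; have [->|w0] := eqVneq w 0; last exact: ltW (pX w w0).
by rewrite /hform !mul0mx mxE.
Qed.

Lemma herm_posdef_form p (X : 'M[C]_p) :
  is_hermitian X -> posdef_form X -> herm_posdef X.
Proof.
move=> hX pX; split => // v v0; have := pX (adjmx v); rewrite /hform adjmxK.
by apply; apply: contra v0 => /eqP v0; rewrite -[v]adjmxK v0 adjmx0.
Qed.

Lemma posdef_unitmx p (X : 'M[C]_p) : posdef_form X -> X \in unitmx.
Proof.
move=> pX; rewrite -row_free_unit; apply: contraT => nfX.
have : kermx X != 0.
  rewrite -mxrank_eq0 mxrank_ker subn_eq0 -ltnNge ltn_neqAle.
  by rewrite nfX rank_leq_row.
case/rowV0Pn => u; rewrite sub_kermx => /eqP uX u0.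
by have := pX u u0; rewrite /hform uX mul0mx mxE ltxx.
Qed.

(** * Courant-Fischer bounds *)

Lemma hermitian_spectral p (X : 'M[C]_p) : is_hermitian X ->
  exists P (d : 'rV[C]_p), [/\ P \is unitarymx,
    X = adjmx P *m diag_mx d *m P & forall i, d 0 i \is Num.real].
Proof.
move=> hX; have hX' : X \is hermsymmx.
  by apply/is_hermitianmxP; rewrite expr0 scale1r -adjmxE hX.
have /orthomx_spectralP XE := hermitian_normalmx hX'.
have uP := spectral_unitarymx X.
exists (spectralmx X), (spectral_diag X); split => //.
- by rewrite {1}XE invmx_unitary // -adjmxE.
- by move=> i; apply: (mxOverP (hermitian_spectral_diag_real hX')).
Qed.

Lemma eigs_similar p (X U V : 'M[C]_p) :
  U *m V = 1%:M -> eigs (V *m X *m U) = eigs X.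
Proof. by move=> UV; rewrite /eigs char_poly_similar. Qed.

Lemma perm_eq_eigs_diag p (d : 'rV[C]_p) :
  perm_eq (eigs (diag_mx d)) [seq d 0 i | i <- enum 'I_p].
Proof.
rewrite /eigs perm_sort; case: closed_field_poly_normal => r /= Er.
apply: perm_eq_prod_XsubC; move: Er.
rewrite (monicP (char_poly_monic _)) scale1r => <-.
rewrite char_poly_trig ?diag_mx_is_trig // big_map big_enum /=.
by apply: eq_bigr => i _; rewrite mxE eqxx mulr1n.
Qed.

Lemma perm_eq_eigs_spectral p (X P : 'M[C]_p) (d : 'rV[C]_p) :
  P \is unitarymx -> X = adjmx P *m diag_mx d *m P ->
  perm_eq (eigs X) [seq d 0 i | i <- enum 'I_p].
Proof.
by move=> /unitarymxP uP ->; rewrite eigs_similar ?perm_eq_eigs_diag // adjmxE.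
Qed.

Lemma eigs_hermitian p (X : 'M[C]_p) : is_hermitian X ->
  size (eigs X) = p /\ sorted <=%R (eigs X).
Proof.
move=> hX; have [P [d [uP XE dr]]] := hermitian_spectral hX.
have XP := perm_eq_eigs_spectral uP XE.
have rX : all (fun x => x \is Num.real) (eigs X).
  by rewrite (perm_all _ XP); apply/allP => _ /mapP [i _ ->].
split => //; first by rewrite (perm_size XP) size_map size_enum_ord.
move: rX; rewrite /eigs; case: closed_field_poly_normal => r _ /=.
rewrite all_sort => rr.
apply: (sort_sorted_in (P := fun x => x \is Num.real)) => // x y xr yr.
exact: real_leVge.
Qed.

Definition selmx p (I : {set 'I_p}) : 'M[C]_(#|I|, p) :=
  \matrix_(j, i) (enum_val j == i)%:R.

Lemma selmx_diag p (I : {set 'I_p}) (d : 'rV[C]_p) :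
  selmx I *m diag_mx d *m adjmx (selmx I) = diag_mx (\row_j d 0 (enum_val j)).
Proof.
apply/matrixP => j j'; rewrite !mxE.
rewrite (bigD1 (enum_val j')) //= big1 => [|i /negPf ne]; last first.
  by rewrite !mxE eq_sym ne rmorph0 mulr0.
rewrite !mxE eqxx rmorph1 mulr1 addr0.
rewrite (bigD1 (enum_val j')) //= big1 => [|i /negPf ne]; last first.
  by rewrite !mxE ne mulr0n mulr0.
rewrite !mxE eqxx mulr1n addr0 (inj_eq enum_val_inj) eq_sym.
by case: eqP => [->|_]; rewrite ?mulr1n ?mulr0n ?mul1r ?mul0r.
Qed.

Lemma selmx_unitary p (I : {set 'I_p}) : selmx I \is unitarymx.
Proof.
apply/unitarymxP; rewrite -adjmxE.
have := selmx_diag I (const_mx 1); rewrite diag_const_mx mulmx1 => ->.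
by apply/matrixP => i j; rewrite !mxE.
Qed.

Section SpectralSubspace.
Variables (p : nat) (X P : 'M[C]_p) (d : 'rV[C]_p).
Hypotheses (uP : P \is unitarymx) (XE : X = adjmx P *m diag_mx d *m P).

Lemma rank_selmx_spectral (I : {set 'I_p}) : \rank (selmx I *m P) = #|I|.
Proof. by apply: mxrank_unitary; rewrite mul_unitarymx ?selmx_unitary. Qed.

Lemma hform_selmx_spectral (I : {set 'I_p}) (y : 'rV[C]_#|I|) :
  let w := y *m (selmx I *m P) in
  hform X w = \sum_j d 0 (enum_val j) * (y 0 j * (y 0 j)^*) /\
  dotmx w w = dotmx y y.
Proof.
rewrite /= /hform !dotmx_adj !adjmxM XE !adjmxE !mulmxA.
rewrite !(mulmxtVK _ uP) -!adjmxE; split.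
  rewrite -!(mulmxA y) mulmxA selmx_diag mul_mx_diag mxE.
  by apply: eq_bigr => j _; rewrite !mxE mulrAC mulrC.
by rewrite !adjmxE (mulmxtVK _ (selmx_unitary I)).
Qed.

Lemma hform_selmx_ge (I : {set 'I_p}) c w :
  (forall i, i \in I -> c <= d 0 i) -> (w <= selmx I *m P)%MS ->
  c * dotmx w w <= hform X w.
Proof.
move=> cI /submxP [y ->]; have [-> ->] := hform_selmx_spectral y.
rewrite dotmx_sum mulr_sumr; apply: ler_sum => j _.
by rewrite ler_wpM2r ?mul_conjC_ge0 ?cI ?enum_valP.
Qed.

Lemma hform_selmx_le (I : {set 'I_p}) c w :
  (forall i, i \in I -> d 0 i <= c) -> (w <= selmx I *m P)%MS ->
  hform X w <= c * dotmx w w.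
Proof.
move=> cI /submxP [y ->]; have [-> ->] := hform_selmx_spectral y.
rewrite dotmx_sum mulr_sumr; apply: ler_sum => j _.
by rewrite ler_wpM2r ?mul_conjC_ge0 ?cI ?enum_valP.
Qed.

End SpectralSubspace.

Lemma eig_ge_subspace p (X : 'M[C]_p) k : is_hermitian X -> (k < p)%N ->
  exists m (W : 'M[C]_(m, p)), (p - k <= \rank W)%N /\
    forall w, (w <= W)%MS -> eig X k * dotmx w w <= hform X w.
Proof.
move=> hX kp; have [P [d [uP XE _]]] := hermitian_spectral hX.
have [sz so] := eigs_hermitian hX.
pose I := [set i | eig X k <= d 0 i].
exists #|I|, (selmx I *m P); rewrite rank_selmx_spectral //; split.
  rewrite /I -(count_map_enum (fun i => d 0 i) (fun x => eig X k <= x)).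
  rewrite -(permP (perm_eq_eigs_spectral uP XE)) -{1}sz.
  by apply: sorted_count_ge_nth; rewrite ?sz.
by move=> w; apply: (hform_selmx_ge uP XE) => i; rewrite inE.
Qed.

Lemma eig_le_subspace p (X : 'M[C]_p) k : is_hermitian X -> (k < p)%N ->
  exists m (W : 'M[C]_(m, p)), (k < \rank W)%N /\
    forall w, (w <= W)%MS -> hform X w <= eig X k * dotmx w w.
Proof.
move=> hX kp; have [P [d [uP XE _]]] := hermitian_spectral hX.
have [sz so] := eigs_hermitian hX.
pose I := [set i | d 0 i <= eig X k].
exists #|I|, (selmx I *m P); rewrite rank_selmx_spectral //; split.
  rewrite /I -(count_map_enum (fun i => d 0 i) (fun x => x <= eig X k)).
  rewrite -(permP (perm_eq_eigs_spectral uP XE)).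
  by apply: sorted_count_le_nth; rewrite ?sz.
by move=> w; apply: (hform_selmx_le uP XE) => i; rewrite inE.
Qed.

Lemma eig_le_of_subspace p (X : 'M[C]_p) k m (W : 'M[C]_(m, p)) c :
  is_hermitian X -> (k < p)%N -> (k < \rank W)%N ->
  (forall w, (w <= W)%MS -> hform X w <= c * dotmx w w) -> eig X k <= c.
Proof.
move=> hX kp rW XW; have [m' [V [rV XV]]] := eig_ge_subspace hX kp.
have [|w w0 /andP [wW wV]] := exists_nonzero_cap (W := W) (V := V); first lia.
have w_gt0 : 0 < dotmx w w by rewrite dnorm_gt0.
by rewrite -(ler_pM2r w_gt0) (le_trans (XV w wV) (XW w wW)).
Qed.

Lemma eig_ge_of_subspace p (X : 'M[C]_p) k m (W : 'M[C]_(m, p)) c :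
  is_hermitian X -> (k < p)%N -> (p - k <= \rank W)%N ->
  (forall w, (w <= W)%MS -> c * dotmx w w <= hform X w) -> c <= eig X k.
Proof.
move=> hX kp rW XW; have [m' [V [rV XV]]] := eig_le_subspace hX kp.
have [|w w0 /andP [wW wV]] := exists_nonzero_cap (W := W) (V := V); first lia.
have w_gt0 : 0 < dotmx w w by rewrite dnorm_gt0.
by rewrite -(ler_pM2r w_gt0) (le_trans (XW w wW) (XV w wV)).
Qed.

Lemma eig_gt0 p (X : 'M[C]_p) k :
  is_hermitian X -> posdef_form X -> (k < p)%N -> 0 < eig X k.
Proof.
move=> hX pX kp; have [m [W [rW XW]]] := eig_le_subspace hX kp.
have /rowV0Pn [w wW w0] : W != 0 by rewrite -mxrank_eq0 -lt0n; lia.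
have w_gt0 : 0 < dotmx w w by rewrite dnorm_gt0.
rewrite -(pmulr_lgt0 _ w_gt0).
exact: lt_le_trans (pX w w0) (XW w wW).
Qed.

(* Cauchy interlacing for the compression [w |-> w *m E] of the form of [X]. *)
Lemma eig_le_compression p q (X : 'M[C]_p) (Y : 'M[C]_q) (E : 'M[C]_(q, p)) k :
  is_hermitian X -> is_hermitian Y -> row_free E -> (k < q)%N -> 0 <= eig Y k ->
  (forall w, hform X (w *m E) <= hform Y w) ->
  (forall w, dotmx w w <= dotmx (w *m E) (w *m E)) -> eig X k <= eig Y k.
Proof.
move=> hX hY fE kq Yk_ge0 XY EY.
have qp : (q <= p)%N by rewrite -(eqP fE) rank_leq_col.
have [m [W [rW YW]]] := eig_le_subspace hY kq.
apply: (eig_le_of_subspace (W := W *m E)); rewrite ?mxrankMfree //; first lia.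
move=> _ /submxP [y ->]; rewrite mulmxA; apply: le_trans (XY _) _.
exact: le_trans (YW _ (submxMl _ _)) (ler_wpM2l Yk_ge0 (EY _)).
Qed.

Lemma eig_ge_compression p q (X : 'M[C]_p) (Y : 'M[C]_q) (E : 'M[C]_(q, p)) k :
  is_hermitian X -> is_hermitian Y -> row_free E -> (k < q)%N ->
  (forall w, hform Y w <= hform X (w *m E)) ->
  (forall w, dotmx (w *m E) (w *m E) = dotmx w w) ->
  eig Y k <= eig X (k + (p - q)).
Proof.
move=> hX hY fE kq YX EY.
have qp : (q <= p)%N by rewrite -(eqP fE) rank_leq_col.
have [m [W [rW YW]]] := eig_ge_subspace hY kq.
apply: (eig_ge_of_subspace (W := W *m E)); rewrite ?mxrankMfree //; try lia.
move=> _ /submxP [y ->]; rewrite mulmxA EY; apply: le_trans _ (YX _).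
exact: YW (submxMl _ _).
Qed.

(** * Blocks and Schur complements *)

Lemma dotmx_row1 m n (w : 'rV[C]_m) (K : 'M[C]_(m, n)) :
  dotmx w w <= dotmx (w *m row_mx 1%:M K) (w *m row_mx 1%:M K).
Proof. by rewrite mul_mx_row mulmx1 dotmx_row lerDl dnorm_ge0. Qed.

Lemma dotmx_row10 m n (w : 'rV[C]_m) :
  dotmx (w *m row_mx 1%:M (0 : 'M[C]_(m, n))) (w *m row_mx 1%:M 0) = dotmx w w.
Proof.
by rewrite mul_mx_row mulmx1 mulmx0 dotmx_row [dotmx 0 0]dotmx_adj mul0mx mxE addr0.
Qed.

Section Blocks.
Variables (n : nat) (M N Nc Mc : 'M[C]_n).
Let H := block_mx M N Nc Mc.
Let S := M - N *m invmx Mc *m Nc.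

Lemma hermitian_blockP : is_hermitian H ->
  [/\ is_hermitian M, is_hermitian Mc, adjmx N = Nc & adjmx Nc = N].
Proof. by rewrite /is_hermitian /H adjmx_block => /eq_block_mx []. Qed.

Lemma hermitian_schur : is_hermitian H -> is_hermitian S.
Proof.
case/hermitian_blockP => hM hMc aN aNc.
by rewrite /is_hermitian /S adjmxD adjmxN !adjmxM adjmx_inv hM hMc aN aNc mulmxA.
Qed.

Lemma hform_row0 w : hform H (w *m row_mx 1%:M 0) = hform M w.
Proof.
rewrite /hform mul_mx_row mulmx1 mulmx0 mul_row_block !mul0mx !addr0.
by rewrite adjmx_row mul_row_col adjmx0 mulmx0 addr0.
Qed.

Lemma hform_0row u : hform H (row_mx 0 u) = hform Mc u.
Proof.
rewrite /hform mul_row_block !mul0mx !add0r adjmx_row mul_row_col.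
by rewrite adjmx0 mulmx0 add0r.
Qed.

Lemma hform_schur w : Mc \in unitmx ->
  hform H (w *m row_mx 1%:M (- (N *m invmx Mc))) = hform S w.
Proof.
move=> uMc; rewrite /hform mul_mx_row mulmx1 mul_row_block.
have -> : w *m N + w *m - (N *m invmx Mc) *m Mc = 0.
  by rewrite (mulmxN w) mulNmx mulmxA mulmxKV // subrr.
rewrite adjmx_row mul_row_col mul0mx addr0.
by rewrite /S mulmxBr (mulmxN w) mulNmx !mulmxA.
Qed.

Lemma posdef_block : is_hermitian H -> posdef_form H ->
  [/\ posdef_form M, Mc \in unitmx, posdef_form S &
      forall w, hform S w <= hform M w].
Proof.
move=> hH pH.
have pMc : posdef_form Mc.
  by move=> u u0; rewrite -hform_0row pH // row_mx_eq0 negb_and u0 orbT.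
have uMc := posdef_unitmx pMc; split => //.
- move=> w w0; rewrite -hform_row0 pH // mul_mx_row mulmx1.
  by rewrite row_mx_eq0 negb_and w0.
- move=> w w0; rewrite -hform_schur // pH // mul_mx_row mulmx1.
  by rewrite row_mx_eq0 negb_and w0.
have [_ hMc aN _] := hermitian_blockP hH.
(* the Schur complement removes the form of [Mc] at [w N Mc^-1] *)
move=> w; rewrite /S /hform mulmxBr mulmxBl mxE gerDl mxE oppr_le0.
have := hform_ge0 pMc (w *m N *m invmx Mc).
by rewrite /hform mulmxKV // !adjmxM adjmx_inv hMc aN !mulmxA.
Qed.

Lemma eig_interlace_block k : is_hermitian H -> posdef_form H -> (k < n)%N ->
  [/\ eig H k <= eig M k, eig M k <= eig H (k + n),
      eig H k <= eig S k & eig S k <= eig H (k + n)].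
Proof.
move=> hH pH kn; have [hM _ _ _] := hermitian_blockP hH.
have hS := hermitian_schur hH.
have [pM uMc pS SM] := posdef_block hH pH.
rewrite (_ : (k + n = k + (n + n - n))%N); last by rewrite addnK.
split.
- apply: (eig_le_compression (E := row_mx 1%:M 0)) => //.
  + exact: row_free_row1.
  + exact: ltW (eig_gt0 hM pM kn).
  + by move=> w; rewrite hform_row0.
  + by move=> w; apply: dotmx_row1.
- apply: (eig_ge_compression (E := row_mx 1%:M 0)) => //.
  + exact: row_free_row1.
  + by move=> w; rewrite hform_row0.
  + by move=> w; apply: dotmx_row10.
- apply: (eig_le_compression (E := row_mx 1%:M (- (N *m invmx Mc)))) => //.
  + exact: row_free_row1.
  + exact: ltW (eig_gt0 hS pS kn).
  + by move=> w; rewrite hform_schur.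
  + by move=> w; apply: dotmx_row1.
- apply: (eig_ge_compression (E := row_mx 1%:M 0)) => //.
  + exact: row_free_row1.
  + by move=> w; rewrite hform_row0; apply: SM.
  + by move=> w; apply: dotmx_row10.
Qed.

End Blocks.

Lemma cond_le_interlacing n (X : 'M[C]_(n + n)) (Y : 'M[C]_n) :
  is_hermitian X -> is_hermitian Y -> posdef_form X -> posdef_form Y ->
  (forall k, (k < n)%N -> (eig X k <= eig Y k) && (eig Y k <= eig X (k + n))) ->
  cond Y <= cond X.
Proof.
move=> hX hY pX pY XY; have [n0|n_gt0] := posnP n.
  have [szX _] := eigs_hermitian hX; have [szY _] := eigs_hermitian hY.
  have X0 : size (eigs X) = 0%N by rewrite szX n0.
  have Y0 : size (eigs Y) = 0%N by rewrite szY n0.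
  by rewrite /cond /eig (size0nil X0) (size0nil Y0) !nth_nil.
have n1 : (n.-1 < n)%N by rewrite prednK.
have [/andP [lo _] /andP [_ hi]] := (XY _ n_gt0, XY _ n1).
have X0 : 0 < eig X 0 by apply: (eig_gt0 hX pX); rewrite addn_gt0 n_gt0.
have Y0 : 0 < eig Y 0 := lt_le_trans X0 lo.
rewrite /cond -[(n + n).-1](_ : (n.-1 + n)%N = _); last by lia.
apply: ler_pM => //.
- exact: ltW (eig_gt0 hY pY n1).
- by rewrite invr_ge0 ltW.
- by rewrite lef_pV2 ?posrE.
Qed.

(** * The complexification of a real symmetric matrix *)

Lemma hform_real_sym p (A : 'M[C]_p) (x y : 'rV[C]_p) :
  real_mx A -> A^T = A -> real_mx x -> real_mx y ->
  hform A (x + 'i *: y) = (x *m A *m x^T) 0 0 + (y *m A *m y^T) 0 0.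
Proof.
move=> rA sA rx ry; have ii : 'i * 'i = -1 :> C by rewrite -expr2 sqrCi.
have yx : (y *m A *m x^T) 0 0 = (x *m A *m y^T) 0 0.
  have : (y *m A *m x^T)^T = x *m A *m y^T by rewrite !trmx_mul trmxK sA mulmxA.
  by move/(congr1 (fun Z : 'M[C]_1 => Z 0 0)); rewrite mxE.
rewrite /hform adjmxD adjmxZ conjCi !adjmx_real // !mulmxDl !mulmxDr.
rewrite -!scalemxAl -!scalemxAr; move: yx.
set a := x *m A *m x^T; set b := x *m A *m y^T; set c := y *m A *m x^T.
by rewrite !mxE => ->; ring: ii.
Qed.

Lemma posdef_form_real_sym p (A : 'M[C]_p) : real_sym_posdef A -> posdef_form A.
Proof.
case=> rA sA pA w w0.
pose x := map_mx (fun z => 'Re z) w; pose y := map_mx (fun z => 'Im z) w.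
have rx : real_mx x by apply/mxOverP => i j; rewrite mxE Creal_Re.
have ry : real_mx y by apply/mxOverP => i j; rewrite mxE Creal_Im.
have rT (v : 'rV[C]_p) : real_mx v -> real_mx v^T.
  by move=> /mxOverP rv; apply/mxOverP => i j; rewrite mxE.
have pA' (v : 'rV[C]_p) : real_mx v -> v != 0 -> 0 < (v *m A *m v^T) 0 0.
  move=> rv v0; have := pA v^T (rT v rv); rewrite trmxK; apply.
  by rewrite trmx_eq0.
have ge0 (v : 'rV[C]_p) : real_mx v -> 0 <= (v *m A *m v^T) 0 0.
  move=> rv; have [->|v0] := eqVneq v 0; last exact: ltW (pA' v rv v0).
  by rewrite !mul0mx mxE.
have wE : w = x + 'i *: y by apply/matrixP => i j; rewrite !mxE -Crect.
rewrite wE hform_real_sym //; have [x0|x0] := eqVneq x 0.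
  rewrite ltr_pwDr ?ge0 // pA' //; apply: contra w0 => /eqP y0.
  by rewrite wE x0 y0 scaler0 addr0.
by rewrite ltr_pwDl ?ge0 ?pA'.
Qed.

Definition Tmx n : 'M[C]_(n + n) := block_mx 1%:M 'i%:M 1%:M (- 'i%:M).

Lemma Tmx_adj n : Tmx n *m adjmx (Tmx n) = 2%:M.
Proof.
have ii : 'i * 'i = -1 :> C by rewrite -expr2 sqrCi.
rewrite /Tmx adjmx_block adjmxN !adjmx_scalar conjC1 conjCi mulmx_block.
rewrite scalar_mx_block !mul1mx !mulNmx !mul_scalar_mx.
congr block_mx; apply/matrixP => i j; rewrite !mxE;
  case: eqP => _; rewrite ?mulr1n ?mulr0n; ring: ii.
Qed.

Lemma Tmx_inv n : Tmx n *m (2^-1 *: adjmx (Tmx n)) = 1%:M.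
Proof. by rewrite -scalemxAr Tmx_adj scale_scalar_mx mulVf ?pnatr_eq0. Qed.

Lemma conj_half : (2^-1 : C)^* = 2^-1.
Proof. by apply: conj_Creal; rewrite rpredV rpred_nat. Qed.

Lemma block_MN_Tmx n (B Cm D : 'M[C]_n) :
  real_mx B -> real_mx Cm -> real_mx D -> B^T = B -> D^T = D ->
  let M := 2^-1 *: (B + D - 'i *: (Cm - Cm^T)) in
  let N := 2^-1 *: (B - D + 'i *: (Cm + Cm^T)) in
  block_mx M N (mxconj N) (mxconj M) =
  2^-1 *: (Tmx n *m block_mx B Cm Cm^T D *m adjmx (Tmx n)).
Proof.
move=> rB rC rD sB sD M N; have ii : 'i * 'i = -1 :> C by rewrite -expr2 sqrCi.
rewrite /Tmx adjmx_block adjmxN !adjmx_scalar conjC1 conjCi !mulmx_block.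
rewrite scale_block_mx !mul1mx !mulmx1 !mulNmx !mulmxN !mul_scalar_mx.
rewrite !mul_mx_scalar /M /N.
rewrite !(mxconjZ, mxconjD, mxconjB, mxconjN, mxconjT) !mxconj_real //.
rewrite conj_half conjCi.
by congr block_mx; apply/matrixP => i j; rewrite !mxE; ring: ii.
Qed.

Lemma posdef_form_congr p (A T : 'M[C]_p) (a : C) :
  0 < a -> T \in unitmx -> posdef_form A ->
  posdef_form (a *: (T *m A *m adjmx T)).
Proof.
move=> a_gt0 uT pA z z0; rewrite /hform -!scalemxAr -scalemxAl mxE.
have -> : z *m (T *m A *m adjmx T) *m adjmx z = z *m T *m A *m adjmx (z *m T).
  by rewrite adjmxM !mulmxA.
rewrite mulr_gt0 // pA //.
by apply: contra z0 => /eqP zT; rewrite -[z](mulmxK uT) zT mul0mx.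
Qed.

Lemma hermitian_posdef_complexified n (B Cm D : 'M[C]_n) :
  real_mx B -> real_mx Cm -> real_mx D ->
  real_sym_posdef (block_mx B Cm Cm^T D) ->
  let A := block_mx B Cm Cm^T D in
  let M := 2^-1 *: (B + D - 'i *: (Cm - Cm^T)) in
  let N := 2^-1 *: (B - D + 'i *: (Cm + Cm^T)) in
  let H := block_mx M N (mxconj N) (mxconj M) in
  [/\ is_hermitian H, posdef_form H & eigs H = eigs A].
Proof.
move=> rB rC rD pA A M N H; have [rA sA _] := pA.
have /eq_block_mx [sB _ _ sD] : block_mx B^T Cm^T^T Cm^T D^T = A.
  by rewrite -tr_block_mx.
have HE : H = 2^-1 *: (Tmx n *m A *m adjmx (Tmx n)).
  exact: block_MN_Tmx rB rC rD sB sD.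
rewrite HE; split.
- by rewrite /is_hermitian adjmxZ !adjmxM adjmxK adjmx_real // sA mulmxA conj_half.
- apply: posdef_form_congr (posdef_form_real_sym pA).
    by rewrite invr_gt0 ltr0n.
  by case: (mulmx1_unit (Tmx_inv n)).
- rewrite !scalemxAl eigs_similar // -scalemxAr scalemxAl.
  exact/mulmx1C/Tmx_inv.
Qed.

End HermitianForms.

Unset Implicit Arguments.

Theorem mainTheorem5 (C : numClosedFieldType) (n : nat) (B Cm D : 'M[C]_n) :
  real_mx B -> real_mx Cm -> real_mx D ->
  real_sym_posdef (block_mx B Cm Cm^T D) ->
  let A := block_mx B Cm Cm^T D in
  let M := 2^-1 *: (B + D - 'i *: (Cm - Cm^T)) in
  let N := 2^-1 *: (B - D + 'i *: (Cm + Cm^T)) in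
  let S := M - N *m invmx (mxconj M) *m mxconj N in
  [/\ is_hermitian (block_mx M N (mxconj N) (mxconj M)),
      eigs (block_mx M N (mxconj N) (mxconj M)) = eigs A,
      herm_posdef M /\ herm_posdef S,
      (forall k : nat, (k < n)%N -> ((eig A k <= eig M k) && (eig M k <= eig A (k + n))) /\
                       ((eig A k <= eig S k) && (eig S k <= eig A (k + n)))) &
      cond M <= cond A /\ cond S <= cond A].
Proof.
move=> rB rC rD pA A M N S; set H := block_mx M N (mxconj N) (mxconj M).
have [hH pH EH] : [/\ is_hermitian H, posdef_form H & eigs H = eigs A].
  exact: hermitian_posdef_complexified rB rC rD pA.
have [hM _ _ _] := hermitian_blockP hH; have hS := hermitian_schur hH.
have [pM _ pS _] := posdef_block hH pH.
have IL k : (k < n)%N -> ((eig H k <= eig M k) && (eig M k <= eig H (k + n))) /\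
                        ((eig H k <= eig S k) && (eig S k <= eig H (k + n))).
  by move=> kn; have [-> -> -> ->] := eig_interlace_block hH pH kn.
have eigHA : eig H = eig A by rewrite /eig EH.
split; [by [] | by [] | by split; apply: herm_posdef_form | by rewrite -eigHA |].
by split; rewrite /cond -eigHA; apply: cond_le_interlacing => // k /IL [].
Qed.
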